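(* For every $\varepsilon>0$ there exists $\delta>0$ such that for all sufficiently large $n$ the following holds: if $\mu\in\mathcal P(\Omega^n)$ is $(\delta,2)$-symmetric, then $\mu\otimes\mu$, viewed as a probability measure on $(\Omega\times\Omega)^n\cong\Omega^n\times\Omega^n$, is $(\varepsilon,2)$-symmetric.
   Context: $\Omega$ is a fixed finite nonempty set, $\mathcal P(\mathcal X)$ the set of probability measures on a finite set $\mathcal X$, $\|\cdot\|_{TV}$ total variation. For a finite set $\Omega'$ (here $\Omega$ or $\Omega\times\Omega$), $\nu\in\mathcal P(\Omega'^n)$ and $x,y\in[n]$, let $\nu_{\downarrow x}$ be the law of $\boldsymbol\sigma(x)$ and $\nu_{\downarrow\{x,y\}}$ the joint law of $(\boldsymbol\sigma(x),\boldsymbol\sigma(y))$ for $\boldsymbol\sigma\sim\nu$. The measure $\nu$ is $(\varepsilon,2)$-symmetric if $\frac1{n^2}\sum_{x,y\in[n]}\|\nu_{\downarrow\{x,y\}}-\nu_{\downarrow x}\otimes\nu_{\downarrow y}\|_{TV}<\varepsilon$. The identification of $\Omega^n\times\Omega^n$ with $(\Omega\times\Omega)^n$ maps $(\sigma,\tau)$ to $((\sigma(x),\tau(x)))_{x\in[n]}$. *)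

From HB Require Import structures.
From mathcomp Require Import all_boot all_order all_algebra.
From mathcomp Require Import reals.
Set Implicit Arguments. Unset Strict Implicit. Unset Printing Implicit Defensive.
Import Order.TTheory GRing.Theory Num.Theory.
Local Open Scope ring_scope.

Section Defs.
Variable R : realType.

Definition is_prob (T : finType) (nu : {ffun T -> R}) : Prop :=
  (forall t, 0 <= nu t) /\ \sum_(t : T) nu t = 1.

(* total variation distance: sup_A |p(A)-q(A)| = (1/2) sum |p t - q t| *)
Definition tv (T : finType) (p q : {ffun T -> R}) : R :=
  2^-1 * \sum_(t : T) `|p t - q t|.

Definition prod_meas (A B : finType) (p : {ffun A -> R}) (q : {ffun B -> R})
  : {ffun A * B -> R} := [ffun ab => p ab.1 * q ab.2].

Definition marg1 (O : finType) (n : nat) (nu : {ffun {ffun 'I_n -> O} -> R})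
  (x : 'I_n) : {ffun O -> R} :=
  [ffun a => \sum_(s : {ffun 'I_n -> O} | s x == a) nu s].

Definition marg2 (O : finType) (n : nat) (nu : {ffun {ffun 'I_n -> O} -> R})
  (x y : 'I_n) : {ffun O * O -> R} :=
  [ffun ab => \sum_(s : {ffun 'I_n -> O} | (s x == ab.1) && (s y == ab.2)) nu s].

Definition symmetric2 (O : finType) (n : nat) (eps : R)
  (nu : {ffun {ffun 'I_n -> O} -> R}) : Prop :=
  (n%:R ^+ 2)^-1 * \sum_(x : 'I_n) \sum_(y : 'I_n)
     tv (marg2 nu x y) (prod_meas (marg1 nu x) (marg1 nu y)) < eps.

(* mu (x) mu on Omega^n x Omega^n, transported to (Omega x Omega)^n via
   (sigma,tau) |-> ((sigma(x),tau(x)))_x *)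
Definition pair_meas (O : finType) (n : nat) (mu : {ffun {ffun 'I_n -> O} -> R})
  : {ffun {ffun 'I_n -> (O * O)%type} -> R} :=
  [ffun s : {ffun 'I_n -> (O * O)%type} => mu [ffun i => (s i).1] * mu [ffun i => (s i).2]].

End Defs.

From HB Require Import structures.
From mathcomp Require Import all_boot all_order all_algebra.
From mathcomp Require Import reals.
Import Order.TTheory GRing.Theory Num.Theory.
Local Open Scope ring_scope.

(* The two-point marginals of [mu (x) mu] are, up to a relabelling of
   coordinates, the products [pi (x) pi] of the two-point marginals [pi] of [mu],
   and similarly for the products of one-point marginals.  Since the total
   variation distance between product measures is subadditive,
   [tv (pi (x) pi) (rho (x) rho) <= 2 tv pi rho], so [mu (x) mu] is
   [(2 delta, 2)]-symmetric whenever [mu] is [(delta, 2)]-symmetric. *)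

Section FiniteMeasures.
Variable R : realType.

Lemma is_prob_fiber_sum (T U : finType) (nu : {ffun T -> R}) (f : T -> U) :
  is_prob nu -> is_prob [ffun u => \sum_(t | f t == u) nu t].
Proof.
case=> nu_ge0 nu_sum1; split=> [u|].
  by rewrite ffunE; apply: sumr_ge0 => t _; apply: nu_ge0.
under eq_bigr do rewrite ffunE.
by rewrite -[RHS]nu_sum1 [RHS](partition_big f predT).
Qed.

Lemma is_prob_prod_meas (A B : finType) (p : {ffun A -> R}) (q : {ffun B -> R}) :
  is_prob p -> is_prob q -> is_prob (prod_meas p q).
Proof.
case=> p_ge0 p_sum1 [q_ge0 q_sum1]; split=> [t|].
  by rewrite ffunE mulr_ge0.
under eq_bigr do rewrite ffunE.
rewrite -(pair_bigA _ (fun a b => p a * q b)) /=.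
by under eq_bigr do rewrite -mulr_sumr q_sum1 mulr1.
Qed.

Lemma tv_comp (T T' : finType) (h : T -> T') (p q : {ffun T' -> R}) :
  bijective h -> tv [ffun t => p (h t)] [ffun t => q (h t)] = tv p q.
Proof.
move=> h_bij; rewrite /tv [in RHS](reindex h) /=; last exact: onW_bij.
by under eq_bigr do rewrite !ffunE.
Qed.

Lemma tv_prod_meas (A B : finType) (p q : {ffun A -> R}) (p' q' : {ffun B -> R}) :
  is_prob p -> is_prob q' ->
  tv (prod_meas p p') (prod_meas q q') <= tv p q + tv p' q'.
Proof.
case=> p_ge0 p_sum1 [q'_ge0 q'_sum1].
rewrite /tv -mulrDr ler_wpM2l ?invr_ge0 ?ler0n //.
under eq_bigr do rewrite !ffunE.
rewrite -(pair_bigA _ (fun a b => `|p a * p' b - q a * q' b|)) /=.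
have split_term a b :
    `|p a * p' b - q a * q' b| <= p a * `|p' b - q' b| + `|p a - q a| * q' b.
  have -> : p a * p' b - q a * q' b = p a * (p' b - q' b) + (p a - q a) * q' b.
    by rewrite mulrBr mulrBl addrA subrK.
  apply: le_trans (ler_normD _ _) _.
  by rewrite !normrM (ger0_norm (p_ge0 a)) (ger0_norm (q'_ge0 b)).
apply: le_trans (ler_sum _ (fun a _ => ler_sum _ (fun b _ => split_term a b))) _.
rewrite [leLHS](eq_bigr (fun a => p a * \sum_b `|p' b - q' b| + `|p a - q a|)).
  by rewrite big_split /= -mulr_suml p_sum1 mul1r addrC.
by move=> a _; rewrite big_split /= -!mulr_sumr q'_sum1 mulr1.
Qed.

End FiniteMeasures.

Section PairMeasure.
Variables (R : realType) (O : finType) (n : nat).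
Variable mu : {ffun {ffun 'I_n -> O} -> R}.

Definition unzip_config (s : {ffun 'I_n -> (O * O)%type}) :=
  ([ffun i => (s i).1], [ffun i => (s i).2]).

Lemma unzip_config_bij : bijective unzip_config.
Proof.
exists (fun st : {ffun 'I_n -> O} * {ffun 'I_n -> O} =>
          [ffun i => (st.1 i, st.2 i)]).
  by move=> s; apply/ffunP => i; rewrite !ffunE; case: (s i).
by case=> s t; congr pair; apply/ffunP => i; rewrite !ffunE.
Qed.

Lemma sum_pair_meas (P Q : pred {ffun 'I_n -> O}) :
  \sum_(s : {ffun 'I_n -> (O * O)%type} | P [ffun i => (s i).1] && Q [ffun i => (s i).2])
      pair_meas mu s
    = (\sum_(sigma | P sigma) mu sigma) * (\sum_(tau | Q tau) mu tau).
Proof.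
rewrite [RHS]mulr_suml; under [RHS]eq_bigr do rewrite mulr_sumr.
rewrite [RHS]pair_big_dep /= (reindex unzip_config); last exact: onW_bij unzip_config_bij.
by apply: eq_bigr => s _; rewrite ffunE.
Qed.

Lemma marg1_pair_meas (x : 'I_n) (ab : O * O) :
  marg1 (pair_meas mu) x ab = marg1 mu x ab.1 * marg1 mu x ab.2.
Proof.
rewrite !ffunE -sum_pair_meas; apply: eq_bigl => s.
by rewrite !ffunE; case: ab (s x) => [a b] [c d]; rewrite xpair_eqE.
Qed.

Definition transpose_pairs {T : Type} (t : ((T * T) * (T * T))%type) :=
  ((t.1.1, t.2.1), (t.1.2, t.2.2)).

Lemma transpose_pairsK (T : Type) : involutive (@transpose_pairs T).
Proof. by case=> [[a b] [c d]]. Qed.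

Lemma marg2_pair_meas (x y : 'I_n) :
  marg2 (pair_meas mu) x y
    = [ffun t => prod_meas (marg2 mu x y) (marg2 mu x y) (transpose_pairs t)].
Proof.
apply/ffunP => -[[a b] [c d]]; rewrite !ffunE -sum_pair_meas.
apply: eq_bigl => s; rewrite !ffunE.
by case: (s x) (s y) => [p q] [r w]; rewrite !xpair_eqE andbACA.
Qed.

Lemma prod_marg1_pair_meas (x y : 'I_n) :
  prod_meas (marg1 (pair_meas mu) x) (marg1 (pair_meas mu) y)
    = [ffun t => prod_meas (prod_meas (marg1 mu x) (marg1 mu y))
                           (prod_meas (marg1 mu x) (marg1 mu y)) (transpose_pairs t)].
Proof.
by apply/ffunP => -[[a b] [c d]]; rewrite [LHS]ffunE !marg1_pair_meas !ffunE /= mulrACA.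
Qed.

Hypothesis mu_prob : is_prob mu.

Lemma is_prob_marg2 (x y : 'I_n) : is_prob (marg2 mu x y).
Proof.
have -> : marg2 mu x y = [ffun ab => \sum_(s : {ffun 'I_n -> O} | (s x, s y) == ab) mu s].
  by apply/ffunP => -[a b]; rewrite !ffunE; apply: eq_bigl => s.
exact: is_prob_fiber_sum.
Qed.

Lemma tv_marg_pair_meas (x y : 'I_n) :
  tv (marg2 (pair_meas mu) x y)
     (prod_meas (marg1 (pair_meas mu) x) (marg1 (pair_meas mu) y))
  <= 2 * tv (marg2 mu x y) (prod_meas (marg1 mu x) (marg1 mu y)).
Proof.
rewrite marg2_pair_meas prod_marg1_pair_meas tv_comp; last first.
  exact: inv_bij (@transpose_pairsK _).
rewrite mulr2n mulrDl mul1r.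
apply: tv_prod_meas; first exact: is_prob_marg2.
by apply: is_prob_prod_meas; apply: is_prob_fiber_sum.
Qed.

Lemma symmetric2_pair_meas (delta : R) :
  symmetric2 delta mu -> symmetric2 (2 * delta) (pair_meas mu).
Proof.
rewrite /symmetric2 => mu_sym.
apply: le_lt_trans (_ : _ <= 2 * ((n%:R ^+ 2)^-1 * \sum_x \sum_y
  tv (marg2 mu x y) (prod_meas (marg1 mu x) (marg1 mu y)))) _; last first.
  by rewrite ltr_pM2l.
rewrite mulrCA ler_wpM2l ?invr_ge0 ?exprn_ge0 ?ler0n // mulr_sumr.
apply: ler_sum => x _; rewrite mulr_sumr; apply: ler_sum => y _.
exact: tv_marg_pair_meas.
Qed.

End PairMeasure.

Theorem proposition2p5 (R : realType) (Omega : finType)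
  (hOmega : (0 < #|Omega|)%N) :
  forall eps : R, 0 < eps ->
  exists2 delta : R, 0 < delta &
  exists N : nat, forall n : nat, (N <= n)%N ->
  forall mu : {ffun {ffun 'I_n -> Omega} -> R},
    is_prob mu -> symmetric2 delta mu -> symmetric2 eps (pair_meas mu).
Proof.
move=> eps eps_gt0; exists (eps / 2); first by rewrite divr_gt0.
exists 0%N => n _ mu mu_prob mu_sym.
rewrite -[eps](@divfK _ 2) ?pnatr_eq0 // mulrC.
exact: symmetric2_pair_meas.
Qed.
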